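(* Let $f:\mathbb{S}^D\to\mathbb{R}$ be differentiable everywhere, and let $z\in\mathbb{S}^D$ satisfy $\inf_{y\in\mathbb{S}^D}\{f(y)-y\cdot z\}>-\infty$. Then for every $\varepsilon>0$ there is $y_\varepsilon\in\mathbb{S}^D$ such that $\inf_{y\in\mathbb{S}^D}\big\{f(y)+\varepsilon\sqrt{1+|y|^2}-y\cdot z\big\}=f(y_\varepsilon)+\varepsilon\sqrt{1+|y_\varepsilon|^2}-y_\varepsilon\cdot z$ and $|z-\nabla f(y_\varepsilon)|\le\varepsilon$. Moreover, $\lim_{\varepsilon\to0}\inf_{y\in\mathbb{S}^D}\big\{f(y)+\varepsilon\sqrt{1+|y|^2}-y\cdot z\big\}=\inf_{y\in\mathbb{S}^D}\{f(y)-y\cdot z\}$.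
   Context: $\mathbb{S}^D$ is the space of real symmetric $D\times D$ matrices, equipped with the entrywise inner product $a\cdot b=\sum_{i,j}a_{ij}b_{ij}$ and norm $|a|=\sqrt{a\cdot a}$; $\nabla f$ denotes the gradient of $f$ on $\mathbb{S}^D$ with respect to this inner product. *)

From HB Require Import structures.
From mathcomp Require Import all_boot all_order all_algebra.
From mathcomp Require Import classical_sets reals.
Set Implicit Arguments. Unset Strict Implicit. Unset Printing Implicit Defensive.
Import Order.TTheory GRing.Theory Num.Theory.
Local Open Scope ring_scope.
Local Open Scope classical_set_scope.

Section Defs.
Context {R : realType} {D : nat}.

(* membership in S^D : real symmetric D x D matrices *)
Definition symmx (A : 'M[R]_D) : Prop := A^T = A.

Definition mdot (a b : 'M[R]_D) : R := \sum_(i < D) \sum_(j < D) a i j * b i j.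

Definition mnorm (a : 'M[R]_D) : R := Num.sqrt (mdot a a).

Definition is_gradient (f : 'M[R]_D -> R) (y g : 'M[R]_D) : Prop :=
  symmx g /\
  forall e : R, 0 < e -> exists d : R, 0 < d /\
    forall h : 'M[R]_D, symmx h -> mnorm h < d ->
      `|f (y + h) - f y - mdot g h| <= e * mnorm h.

Definition sym_differentiable (f : 'M[R]_D -> R) : Prop :=
  forall y, symmx y -> exists g, is_gradient f y g.

Definition Sinf (F : 'M[R]_D -> R) : R := inf [set F y | y in [set y | symmx y]].

End Defs.

From HB Require Import structures.
From mathcomp Require Import all_boot all_order all_algebra.
From mathcomp Require Import classical_sets reals.
From mathcomp Require Import ring lra.
From mathcomp Require Import boolp topology normedtype derive.
Import Order.TTheory GRing.Theory Num.Theory.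
Import numFieldNormedType.Exports.
Local Open Scope ring_scope.

(* Adding the penalty e <y>, with <y> = sqrt (1 + |y|^2), to y |-> f y - y.z
   makes it grow at least like e |y|, so this function, continuous on the
   finite-dimensional space S^D, attains its infimum at some y_e.  Since <.> is
   1-Lipschitz, comparing its values at y_e and at y_e + t (z - grad f y_e) for
   small t > 0 gives |z - grad f y_e| <= e.  The penalty is nonnegative and
   vanishes pointwise as e -> 0, whence the convergence of the infima. *)

Section Frobenius.
Context {R : realType} {D : nat}.
Implicit Types (a b c : 'M[R]_D) (t : R).

Lemma mdotC a b : mdot a b = mdot b a.
Proof. by apply: eq_bigr => i _; apply: eq_bigr => j _; rewrite mulrC. Qed.

Lemma mdotDl a b c : mdot (a + b) c = mdot a c + mdot b c.
Proof.
rewrite /mdot -big_split; apply: eq_bigr => i _; rewrite -big_split.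
by apply: eq_bigr => j _; rewrite mxE mulrDl.
Qed.

Lemma mdotZl t a b : mdot (t *: a) b = t * mdot a b.
Proof.
rewrite /mdot mulr_sumr; apply: eq_bigr => i _; rewrite mulr_sumr.
by apply: eq_bigr => j _; rewrite mxE mulrA.
Qed.

Lemma mdotBl a b c : mdot (a - b) c = mdot a c - mdot b c.
Proof. by rewrite mdotDl -scaleN1r mdotZl mulN1r. Qed.

Lemma mdotDr a b c : mdot a (b + c) = mdot a b + mdot a c.
Proof. by rewrite mdotC mdotDl !(mdotC a). Qed.

Lemma mdotZr t a b : mdot a (t *: b) = t * mdot a b.
Proof. by rewrite mdotC mdotZl mdotC. Qed.

Lemma mdotBr a b c : mdot a (b - c) = mdot a b - mdot a c.
Proof. by rewrite mdotC mdotBl !(mdotC a). Qed.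

Lemma mdot_ge0 a : 0 <= mdot a a.
Proof. by do 2 apply: sumr_ge0 => ? _; rewrite -expr2 sqr_ge0. Qed.

Lemma mdot_sqr_le a b : mdot a b ^+ 2 <= mdot a a * mdot b b.
Proof.
have quad t : 0 <= t ^+ 2 * mdot a a - 2 * t * mdot a b + mdot b b.
  suff -> : t ^+ 2 * mdot a a - 2 * t * mdot a b + mdot b b
            = mdot (t *: a - b) (t *: a - b) by exact: mdot_ge0.
  by rewrite !(mdotBl, mdotBr, mdotZl, mdotZr) (mdotC b a); ring.
have [A0|A_neq0] := eqVneq (mdot a a) 0.
  rewrite A0 mul0r; have [->|C_neq0] := eqVneq (mdot a b) 0; first by rewrite expr0n.
  have := quad ((mdot b b + 1) / mdot a b).
  rewrite A0 mulr0 add0r -mulrA divfK //; have := mdot_ge0 b; lra.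
have A_gt0 : 0 < mdot a a by rewrite lt_def A_neq0 mdot_ge0.
have := quad (mdot a b / mdot a a).
set A := mdot a a; set C := mdot a b; set B := mdot b b.
have -> : (C / A) ^+ 2 * A - 2 * (C / A) * C + B = B - C ^+ 2 / A by field.
by rewrite subr_ge0 ler_pdivrMr // mulrC.
Qed.

Lemma mnorm_ge0 a : 0 <= mnorm a.
Proof. exact: sqrtr_ge0. Qed.

Lemma mnorm_sqr a : mnorm a ^+ 2 = mdot a a.
Proof. by rewrite sqr_sqrtr // mdot_ge0. Qed.

Lemma normr_mdot_le a b : `|mdot a b| <= mnorm a * mnorm b.
Proof.
rewrite /mnorm -sqrtrM ?mdot_ge0 // -sqrtr_sqr.
by rewrite ler_sqrt ?mdot_sqr_le // mulr_ge0 ?mdot_ge0.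
Qed.

Lemma mnormD a b : mnorm (a + b) <= mnorm a + mnorm b.
Proof.
rewrite -(ler_pXn2r (_ : 0 < 2)%N) ?nnegrE ?addr_ge0 ?mnorm_ge0 //.
rewrite mnorm_sqr sqrrD !mnorm_sqr mdotDl !mdotDr (mdotC b a).
have := normr_mdot_le a b; have := ler_norm (mdot a b); lra.
Qed.

Lemma mnormZ t a : mnorm (t *: a) = `|t| * mnorm a.
Proof.
by rewrite /mnorm mdotZl mdotZr mulrA -expr2 sqrtrM ?sqr_ge0 // sqrtr_sqr.
Qed.

Lemma mnorm_dist_le a b : `|mnorm a - mnorm b| <= mnorm (a - b).
Proof.
have mnormBC : mnorm (b - a) = mnorm (a - b).
  by rewrite -opprB -scaleN1r mnormZ normrN1 mul1r.
have := mnormD (a - b) b; have := mnormD (b - a) a.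
by rewrite !subrK mnormBC ler_norml; lra.
Qed.

Lemma normr_entry_le_mnorm a i j : `|a i j| <= mnorm a.
Proof.
rewrite /mnorm -sqrtr_sqr ler_sqrt ?mdot_ge0 //.
rewrite /mdot (bigD1 i) //= (bigD1 j) //= -expr2 -addrA lerDl.
by apply: addr_ge0; do ?apply: sumr_ge0 => ? _; rewrite -expr2 sqr_ge0.
Qed.

Lemma mnorm_le_entry_bound a t :
  0 <= t -> (forall i j, `|a i j| <= t) -> mnorm a <= D%:R * t.
Proof.
move=> t_ge0 a_le; rewrite -[D%:R * t]ger0_norm ?mulr_ge0 // -sqrtr_sqr.
rewrite ler_sqrt ?sqr_ge0 //.
apply: (@le_trans _ _ (\sum_(i < D) \sum_(j < D) t ^+ 2)).
  do 2 apply: ler_sum => ? _.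
  by apply: le_trans (ler_norm _) _; rewrite normrM expr2 ler_pM.
rewrite !sumr_const card_ord -mulrnA -[_ *+ (D * D)]mulr_natr natrM.
by rewrite -expr2 exprMn mulrC.
Qed.

End Frobenius.

Lemma lipschitz_sqrt1Dsqr {R : realType} (x y : R) :
  `|Num.sqrt (1 + x ^+ 2) - Num.sqrt (1 + y ^+ 2)| <= `|x - y|.
Proof.
set p := Num.sqrt _; set q := Num.sqrt _.
have p_ge0 : 0 <= p by exact: sqrtr_ge0.
have q_ge0 : 0 <= q by exact: sqrtr_ge0.
have p2 : p ^+ 2 = 1 + x ^+ 2 by rewrite sqr_sqrtr // addr_ge0 ?sqr_ge0.
have q2 : q ^+ 2 = 1 + y ^+ 2 by rewrite sqr_sqrtr // addr_ge0 ?sqr_ge0.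
have pq : 1 + x * y <= p * q.
  have [xy_ge0|xy_lt0] := leP 0 (1 + x * y); last exact: le_trans (ltW xy_lt0) (mulr_ge0 p_ge0 q_ge0).
  rewrite -(ler_pXn2r (_ : 0 < 2)%N) ?nnegrE ?mulr_ge0 // exprMn p2 q2.
  have := sqr_ge0 (x - y); nra.
rewrite -(ler_pXn2r (_ : 0 < 2)%N) ?nnegrE ?normr_ge0 // !real_normK ?num_real //.
nra.
Qed.

Section Penalty.
Context {R : realType} {D : nat}.
Implicit Types (y h : 'M[R]_D).

Definition penalty y : R := Num.sqrt (1 + mnorm y ^+ 2).

Lemma penalty_ge0 y : 0 <= penalty y.
Proof. exact: sqrtr_ge0. Qed.

Lemma mnorm_le_penalty y : mnorm y <= penalty y.
Proof.
rewrite -[mnorm y]ger0_norm ?mnorm_ge0 // -sqrtr_sqr ler_sqrt.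
  by rewrite lerDr.
by rewrite addr_ge0 ?sqr_ge0.
Qed.

Lemma normr_penaltyD_le y h : `|penalty (y + h) - penalty y| <= mnorm h.
Proof.
apply: le_trans (lipschitz_sqrt1Dsqr _ _) _.
by have := mnorm_dist_le (y + h) y; rewrite [y + h - y]addrC addKr.
Qed.

End Penalty.

Section SymmetricMatrices.
Context {R : realType} {D : nat}.
Implicit Types (a b : 'M[R]_D) (t : R).

Lemma symmx0 : symmx (0 : 'M[R]_D).
Proof. exact: trmx0. Qed.

Lemma symmxD {a b} : symmx a -> symmx b -> symmx (a + b).
Proof. by rewrite /symmx linearD /= => -> ->. Qed.

Lemma symmxZ {t a} : symmx a -> symmx (t *: a).
Proof. by rewrite /symmx linearZ /= => ->. Qed.

Lemma symmxB {a b} : symmx a -> symmx b -> symmx (a - b).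
Proof. by rewrite /symmx linearB /= => -> ->. Qed.

End SymmetricMatrices.

Section SymContinuity.
Context {R : realType} {D : nat}.
Implicit Types (F G : 'M[R]_D -> R) (y g : 'M[R]_D).

Definition sym_continuous_at F y : Prop :=
  forall eps : R, 0 < eps -> exists2 d : R, 0 < d &
    forall h, symmx h -> mnorm h < d -> `|F (y + h) - F y| < eps.

Definition sym_continuous F : Prop := forall y, symmx y -> sym_continuous_at F y.

Lemma sym_continuous_atD F G y : sym_continuous_at F y -> sym_continuous_at G y ->
  sym_continuous_at (fun x => F x + G x) y.
Proof.
move=> cF cG eps eps_gt0; have eps2_gt0 : 0 < eps / 2 by rewrite divr_gt0.
have [dF dF_gt0 HF] := cF _ eps2_gt0; have [dG dG_gt0 HG] := cG _ eps2_gt0.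
exists (Num.min dF dG) => [|h sh]; first by rewrite lt_min dF_gt0.
rewrite lt_min => /andP[/(HF h sh) {}HF /(HG h sh) {}HG].
rewrite opprD addrACA; apply: le_lt_trans (ler_normD _ _) _; lra.
Qed.

Lemma sym_continuousD F G : sym_continuous F -> sym_continuous G ->
  sym_continuous (fun x => F x + G x).
Proof. by move=> cF cG y sy; apply: sym_continuous_atD; [apply: cF | apply: cG]. Qed.

Lemma lipschitz_sym_continuous F (K : R) :
  (forall y h, symmx y -> symmx h -> `|F (y + h) - F y| <= K * mnorm h) ->
  sym_continuous F.
Proof.
move=> F_lip y sy eps eps_gt0; have K1_gt0 : 0 < `|K| + 1 by rewrite ltr_wpDl.
exists (eps / (`|K| + 1)) => [|h sh h_lt]; first by rewrite divr_gt0.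
apply: le_lt_trans (F_lip y h sy sh) _.
apply: le_lt_trans (ler_wpM2r (mnorm_ge0 h) (ler_norm K)) _.
move: h_lt; rewrite ltr_pdivlMr // => h_lt.
have := mnorm_ge0 h; have := normr_ge0 K; nra.
Qed.

Lemma is_gradient_continuous f y g : is_gradient f y g -> sym_continuous_at f y.
Proof.
case=> _ /(_ 1 ltr01) [d [d_gt0 Hd]].
have f_lip h : symmx h -> mnorm h < d -> `|f (y + h) - f y| <= (mnorm g + 1) * mnorm h.
  move=> sh h_lt; rewrite -[f (y + h) - f y](subrK (mdot g h)).
  rewrite mulrDl mul1r (addrC (mnorm g * _)); apply: le_trans (ler_normD _ _) _.
  by apply: lerD; [rewrite -[mnorm h]mul1r; exact: Hd | exact: normr_mdot_le].
move=> eps eps_gt0; have K_gt0 : 0 < mnorm g + 1 by rewrite ltr_wpDl ?mnorm_ge0.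
exists (Num.min d (eps / (mnorm g + 1))) => [|h sh]; first by rewrite lt_min d_gt0 divr_gt0.
rewrite lt_min ltr_pdivlMr // => /andP[/(f_lip h sh) f_le h_lt].
by apply: le_lt_trans f_le _; rewrite mulrC.
Qed.

Lemma sym_differentiable_continuous f : sym_differentiable f -> sym_continuous f.
Proof. by move=> df y sy; have [g /is_gradient_continuous] := df y sy. Qed.

End SymContinuity.

Local Open Scope classical_set_scope.

Section Symmetrization.
Context {R : realType} {D : nat}.
Implicit Types (v w : 'rV[R]_(D * D)) (F : 'M[R]_D -> R).

(* S^D is parametrized by 'rV_(D * D), where boxes are compact (rV_compact). *)
Definition symmetrize v : 'M[R]_D := 2^-1 *: (vec_mx v + (vec_mx v)^T).

Lemma symmx_symmetrize v : symmx (symmetrize v).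
Proof. by rewrite /symmx /symmetrize linearZ linearD /= trmxK addrC. Qed.

Lemma symmetrize_mxvec {y} : symmx y -> symmetrize (mxvec y) = y.
Proof.
rewrite /symmetrize mxvecK => ->.
by rewrite -mulr2n -scalerMnr scalerMnl -mulr_natr mulVf ?scale1r ?pnatr_eq0.
Qed.

Lemma symmetrizeB v w : symmetrize w - symmetrize v = symmetrize (w - v).
Proof. by rewrite /symmetrize !linearB /= -scalerBr opprD addrACA. Qed.

Lemma mnorm_symmetrize_le v t :
  0 <= t -> (forall k, `|v 0 k| <= t) -> mnorm (symmetrize v) <= D%:R * t.
Proof.
move=> t_ge0 v_le; apply: mnorm_le_entry_bound => // i j; rewrite !mxE.
have := v_le (mxvec_index i j); have := v_le (mxvec_index j i).
have := ler_normD (v 0 (mxvec_index i j)) (v 0 (mxvec_index j i)).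
rewrite normrM ger0_norm ?invr_ge0 ?ler0n //; lra.
Qed.

Lemma continuous_comp_symmetrize F : sym_continuous F -> continuous (F \o symmetrize).
Proof.
move=> cF v; apply/(@cvgrPdist_lt _ _ _ (nbhs v) (nbhs_filter v)) => eps eps_gt0.
have [d d_gt0 Hd] := cF _ (symmx_symmetrize v) _ eps_gt0.
have D1_gt0 : 0 < D%:R + 1 :> R by rewrite ltr_wpDl.
apply/nbhs_ballP; exists (d / (D%:R + 1)) => [|w [_ vw]]; first by rewrite /= divr_gt0.
have h_le : mnorm (symmetrize (w - v)) <= D%:R * (d / (D%:R + 1)).
  apply: mnorm_symmetrize_le => [|k]; first by rewrite ltW ?divr_gt0.
  by rewrite !mxE distrC ltW // (vw 0 k).
have h_lt : mnorm (symmetrize (w - v)) < d.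
  apply: le_lt_trans h_le _; rewrite mulrA ltr_pdivrMr // mulrDr mulr1 mulrC.
  by rewrite ltrDl.
rewrite /= distrC (_ : symmetrize w = symmetrize v + symmetrize (w - v)).
  exact: Hd (symmx_symmetrize _) h_lt.
by rewrite -symmetrizeB addrC subrK.
Qed.

End Symmetrization.

Lemma sym_coercive_argmin {R : realType} {D : nat} (F : 'M[R]_D -> R) (r : R) :
  sym_continuous F -> (forall y, symmx y -> r < mnorm y -> F 0 <= F y) ->
  exists2 y0, symmx y0 & forall y, symmx y -> F y0 <= F y.
Proof.
move=> cF F_coercive.
pose box := [set v : 'rV[R]_(D * D) | forall k, `[- `|r|, `|r|] (v 0 k)].
have box_compact : compact box.
  by apply: (@rV_compact _ _ (fun=> `[- `|r|, `|r|])) => _; exact: segment_compact.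
have box0 : box 0 by move=> k /=; rewrite mxE in_itv /= oppr_le0 normr_ge0.
have [c _ c_min] := compact_EVT_min (ex_intro _ _ box0) box_compact
  (continuous_subspaceT (continuous_comp_symmetrize _ cF)).
exists (symmetrize c) => [|y sy]; first exact: symmx_symmetrize.
have [y_in|/existsNP[i /existsNP[j /negP]]] := pselect (forall i j, `|y i j| <= `|r|).
  rewrite -(symmetrize_mxvec sy); apply: c_min; rewrite inE => k /=.
  by case/mxvec_indexP: k => i j; rewrite mxvecE in_itv /= -ler_norml.
rewrite -ltNge => r_lt; apply: le_trans (F_coercive y sy _).
  by rewrite -(symmetrize_mxvec symmx0) linear0; apply: c_min; rewrite inE.
exact: le_lt_trans (ler_norm r) (lt_le_trans r_lt (normr_entry_le_mnorm y i j)).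
Qed.

Section Infimum.
Context {R : realType} {D : nat}.
Implicit Types (F : 'M[R]_D -> R) (y : 'M[R]_D).

Lemma Sinf_le {F m y} : (forall x, symmx x -> m <= F x) -> symmx y -> Sinf F <= F y.
Proof.
move=> F_ge sy; apply: ge_inf; last by exists y.
by exists m => _ [x sx <-]; exact: F_ge.
Qed.

Lemma Sinf_ge {F m} : (forall x, symmx x -> m <= F x) -> m <= Sinf F.
Proof.
move=> F_ge; apply: lb_le_inf; first by exists (F 0), 0 => //; exact: symmx0.
by move=> _ [x sx <-]; exact: F_ge.
Qed.

Lemma Sinf_argmin F y : symmx y -> (forall x, symmx x -> F y <= F x) -> Sinf F = F y.
Proof.
by move=> sy F_ge; apply/le_anti; rewrite (Sinf_le F_ge sy) Sinf_ge.
Qed.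

Lemma Sinf_adherent {F m eps} : (forall x, symmx x -> m <= F x) -> 0 < eps ->
  exists2 y, symmx y & F y < Sinf F + eps.
Proof.
move=> F_ge eps_gt0.
have F_inf : has_inf [set F y | y in [set y | symmx y]].
  split; first by exists (F 0), 0 => //; exact: symmx0.
  by exists m => _ [x sx <-]; exact: F_ge.
by have [_ [y sy <-] Fy_lt] := inf_adherent eps_gt0 F_inf; exists y.
Qed.

Lemma Sinf_perturb_cvg {F} {phi : 'M[R]_D -> R} {m} :
  (forall y, symmx y -> m <= F y) -> (forall y, 0 <= phi y) ->
  forall eta : R, 0 < eta -> exists delta : R, 0 < delta /\
    forall e : R, 0 < e -> e < delta ->
      `|Sinf (fun y => F y + e * phi y) - Sinf F| < eta.
Proof.
move=> F_ge phi_ge0 eta eta_gt0; have eta2_gt0 : 0 < eta / 2 by rewrite divr_gt0.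
have [y0 sy0 Fy0_lt] := Sinf_adherent F_ge eta2_gt0.
have phi1_gt0 : 0 < phi y0 + 1 by rewrite ltr_wpDl.
exists (eta / 2 / (phi y0 + 1)); split => [|e e_gt0]; first by rewrite divr_gt0.
rewrite ltr_pdivlMr // => e_lt.
have Fe_ge x : symmx x -> Sinf F <= F x + e * phi x.
  move=> sx; rewrite -[Sinf F]addr0; apply: lerD; first exact: Sinf_le F_ge sx.
  exact: mulr_ge0 (ltW e_gt0) (phi_ge0 x).
have Se_le := Sinf_le Fe_ge sy0; have Se_ge := Sinf_ge Fe_ge.
rewrite mulrDr mulr1 in e_lt; rewrite ger0_norm ?subr_ge0 //; lra.
Qed.

End Infimum.

Section Penalized.
Context {R : realType} {D : nat} (f : 'M[R]_D -> R) (z : 'M[R]_D).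

Definition penalized (e : R) (y : 'M[R]_D) : R := f y + e * penalty y - mdot y z.

Lemma penalized_continuous e : sym_differentiable f -> sym_continuous (penalized e).
Proof.
move=> df; apply: sym_continuousD; first apply: sym_continuousD.
- exact: sym_differentiable_continuous.
- apply: (@lipschitz_sym_continuous _ _ _ `|e|) => y h _ _.
  by rewrite -mulrBr normrM ler_wpM2l ?normr_penaltyD_le.
- apply: (@lipschitz_sym_continuous _ _ _ (mnorm z)) => y h _ _.
  rewrite mdotDl opprD opprK addrAC addNr add0r normrN mulrC.
  exact: normr_mdot_le.
Qed.

Lemma penalized_argmin {e m} : sym_differentiable f -> 0 < e ->
    (forall y, symmx y -> m <= f y - mdot y z) ->
  exists2 ye, symmx ye & forall y, symmx y -> penalized e ye <= penalized e y.
Proof.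
move=> df e_gt0 f_ge.
apply: (@sym_coercive_argmin _ _ _ ((penalized e 0 - m) / e)).
  exact: penalized_continuous.
move=> y sy; rewrite ltr_pdivrMr // => y_large.
have := ler_wpM2l (ltW e_gt0) (mnorm_le_penalty y); have := f_ge y sy.
rewrite /penalized in y_large *; lra.
Qed.

Lemma penalizedD_le e y g h : 0 <= e ->
  penalized e (y + h) - penalized e y
    <= (f (y + h) - f y - mdot g h) + e * mnorm h - mdot h (z - g).
Proof.
move=> e_ge0; rewrite /penalized mdotDl mdotBr (mdotC h g).
have := ler_wpM2l e_ge0 (le_trans (ler_norm _) (normr_penaltyD_le y h)).
rewrite mulrBr; lra.
Qed.

Lemma argmin_penalized_gradient e ye g : symmx z -> 0 <= e -> symmx ye ->
    is_gradient f ye g -> (forall y, symmx y -> penalized e ye <= penalized e y) ->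
  mnorm (z - g) <= e.
Proof.
move=> sz e_ge0 sye ye_grad ye_min; case: (ye_grad) => sg g_approx.
set w := z - g; apply/ler_addgt0Pr => eps eps_gt0.
have [w0|w_neq0] := eqVneq (mnorm w) 0; first by rewrite w0 addr_ge0 // ltW.
have w_gt0 : 0 < mnorm w by rewrite lt_def w_neq0 mnorm_ge0.
have [d [d_gt0 Hd]] := g_approx _ eps_gt0.
(* Step from ye along w = z - g, inside the ball where the gradient is eps-accurate. *)
pose t := d / 2 / mnorm w; have t_gt0 : 0 < t by rewrite !divr_gt0.
have sh : symmx (t *: w) by apply/symmxZ/symmxB.
have tw_norm : mnorm (t *: w) = t * mnorm w by rewrite mnormZ gtr0_norm.
have tw_lt : mnorm (t *: w) < d.
  by rewrite tw_norm /t divfK ?gt_eqF // ltr_pdivrMr // ltr_pMr // ltr1n.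
have := Hd _ sh tw_lt; have := penalizedD_le e ye g (t *: w) e_ge0.
have := ye_min _ (symmxD sye sh).
rewrite tw_norm mdotZl -mnorm_sqr -/w => ye_le incr_le rem_le.
have key : t * mnorm w * mnorm w <= t * mnorm w * (e + eps).
  have := ler_norm (f (ye + t *: w) - f ye - mdot g (t *: w)); lra.
by rewrite ler_pM2l ?(mulr_gt0 t_gt0 w_gt0) in key.
Qed.

End Penalized.

Local Close Scope classical_set_scope.

Theorem lemma3p2 (R : realType) (D : nat) (f : 'M[R]_D -> R) (z : 'M[R]_D) :
  sym_differentiable f ->
  symmx z ->
  (exists m : R, forall y : 'M[R]_D, symmx y -> m <= f y - mdot y z) ->
  (forall e : R, 0 < e ->
     exists ye : 'M[R]_D, symmx ye /\
       Sinf (fun y => f y + e * Num.sqrt (1 + mnorm y ^+ 2) - mdot y z)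
         = f ye + e * Num.sqrt (1 + mnorm ye ^+ 2) - mdot ye z /\
       exists g : 'M[R]_D, is_gradient f ye g /\ mnorm (z - g) <= e) /\
  (forall eta : R, 0 < eta -> exists delta : R, 0 < delta /\
     forall e : R, 0 < e -> e < delta ->
       `| Sinf (fun y => f y + e * Num.sqrt (1 + mnorm y ^+ 2) - mdot y z)
          - Sinf (fun y => f y - mdot y z) | < eta).
Proof.
move=> df sz [m f_ge]; split => [e e_gt0 | eta eta_gt0].
  have [ye sye ye_min] := penalized_argmin f z df e_gt0 f_ge.
  have [g ye_grad] := df ye sye.
  exists ye; split=> //; split; first exact: Sinf_argmin sye ye_min.
  by exists g; split=> //; apply: argmin_penalized_gradient ye_min; rewrite ?ltW.
have [delta [delta_gt0 Sinf_close]] := Sinf_perturb_cvg f_ge penalty_ge0 _ eta_gt0.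
exists delta; split=> // e e_gt0 e_lt.
have -> : (fun y => f y + e * Num.sqrt (1 + mnorm y ^+ 2) - mdot y z)
          = fun y => f y - mdot y z + e * penalty y by apply/funext => y; rewrite addrAC.
exact: Sinf_close.
Qed.
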